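(* Let $D=\{(x^i,y^i)\}_{i=1}^n$ be any training sequence and $JJ=\{JJ_{x^i}\}$ substructure sets, and let $R$ be the radius of $D$ and $R^{JJ}$ the mixed assignment radius with respect to $JJ$. Consider the first pass of SWVP over $D$ (in the given order), assuming that at every update the weights returned by $\textsc{SetGamma}$ satisfy the $\gamma$ selection conditions (1) and (2). Then the number of mistakes (updates) made in this first pass satisfies $$\#\text{mistakes-SWVP}\le\min_{\mathbf{u}:\|\mathbf{u}\|=1,\ \delta>0}\frac{(R^{JJ}+D_{\mathbf{u},\delta})^2}{(\delta+r^{diff})^2},$$ where $r^{diff}=r^{diff}(\mathbf{u})\ge 0$. Moreover, for every $\mathbf{u},\delta$ this quantity is at most $\frac{(R+D_{\mathbf{u},\delta})^2}{\delta^2}$.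
   Context: Structured prediction setting: for each input $x$ the output space is $\mathcal{Y}(x)=D_Y^{L_x}$ for a finite domain $D_Y$, with feature map $\phi(x,y')\in\mathbb{R}^d$; $\Delta\phi(x,y,z)=\phi(x,y)-\phi(x,z)$; $[n]=\{1,\dots,n\}$. Mixed assignment: for $y^*,y\in\mathcal{Y}(x)$ and $J\subseteq[L_x]$, $m^J(y^*,y)$ has $k$-th coordinate $y^*_k$ if $k\in J$ and $y_k$ otherwise. Substructure sets $JJ_{x^i}\subseteq 2^{[L_{x^i}]}$ are fixed. SWVP algorithm: initialize $\mathbf{w}=0$; cycle through $(x,y)\in D$; compute $y^*=\arg\max_{y'\in\mathcal{Y}(x)}\mathbf{w}\cdot\phi(x,y')$; if $y^*\neq y$ (a mistake), with $m^J=m^J(y^*,y)$ and $I=\{J\in JJ_x: m^J\ne y\}$, obtain weights $\gamma(m^J)$, $J\in I$, from $\textsc{SetGamma}$ and set $\mathbf{w}\leftarrow\mathbf{w}+\sum_{J\in I}\gamma(m^J)\Delta\phi(x,y,m^J)$. $\gamma$ selection conditions (current $\mathbf{w}$): (1) $\gamma(m^J)\ge0$, $\sum_{J\in I}\gamma(m^J)=1$; (2) $\mathbf{w}\cdot\sum_{J\in I}\gamma(m^J)\Delta\phi(x,y,m^J)\le0$. Radius $R$: minimal constant with $\|\Delta\phi(x^i,y^i,z)\|\le R$ for all $i$, $z\in\mathcal{Y}(x^i)$. Mixed assignment radius $R^{JJ}$: minimal constant with $\|\Delta\phi(x^i,y^i,m^J(z,y^i))\|\le R^{JJ}$ for all $i$,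 $z\in\mathcal{Y}(x^i)$, $J\in JJ_{x^i}$. For a unit vector $\mathbf{u}$ and $\delta>0$: $r^i=\mathbf{u}\cdot\phi(x^i,y^i)-\max_{z\in\mathcal{Y}(x^i),z\ne y^i}\mathbf{u}\cdot\phi(x^i,z)$; $\epsilon_i=\max\{0,\delta-r^i\}$; $D_{\mathbf{u},\delta}=\sqrt{\sum_{i=1}^n\epsilon_i^2}$; ${r^i}^{JJ}=\mathbf{u}\cdot\phi(x^i,y^i)-\max_{z\in\mathcal{Y}(x^i),J\in JJ_{x^i},\,m^J(z,y^i)\ne y^i}\mathbf{u}\cdot\phi(x^i,m^J(z,y^i))$; and $r^{diff}=\min_i\{{r^i}^{JJ}-r^i\}$. *)

(* real quantities live in an arbitrary real closed field R
   (needed for Num.sqrt in the Euclidean norm). *)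
From HB Require Import structures.
From mathcomp Require Import all_boot all_order all_algebra.
Set Implicit Arguments. Unset Strict Implicit. Unset Printing Implicit Defensive.
Import Order.TTheory GRing.Theory Num.Theory.
Local Open Scope ring_scope.

Section SWVP.
Context {R : rcfType} {d : nat}.

Definition dotv (u v : 'rV[R]_d) : R := \sum_(k < d) u 0 k * v 0 k.
Definition normv (v : 'rV[R]_d) : R := Num.sqrt (dotv v v).

(* Maximum / minimum of a NONEMPTY finite list of reals (the default
   [head 0 s] is itself an element of s, so it does not affect the value
   when s is nonempty). *)
Definition maxne (s : seq R) : R := \big[Num.max/head 0 s]_(a <- s) a.
Definition minne (s : seq R) : R := \big[Num.min/head 0 s]_(a <- s) a.

Context {DY : finType} {X : Type} {L : X -> nat}
        (phi : forall x : X, {ffun 'I_(L x) -> DY} -> 'rV[R]_d).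

Definition dphi (x : X) (y z : {ffun 'I_(L x) -> DY}) : 'rV[R]_d :=
  phi y - phi z.

End SWVP.

Definition mixed {DY : finType} {l : nat} (J : {set 'I_l})
  (ys y : {ffun 'I_l -> DY}) : {ffun 'I_l -> DY} :=
  [ffun k => if k \in J then ys k else y k].

Section Quantities.
Context {R : rcfType} {d : nat} {DY : finType} {X : Type} {L : X -> nat}
        (phi : forall x : X, {ffun 'I_(L x) -> DY} -> 'rV[R]_d)
        (JJ : forall x : X, {set {set 'I_(L x)}}).

Definition Iset (x : X) (ystar y : {ffun 'I_(L x) -> DY}) : {set {set 'I_(L x)}} :=
  [set J in JJ x | mixed J ystar y != y].

Definition swvp_upd (x : X) (ystar y : {ffun 'I_(L x) -> DY})
  (gamma : {set 'I_(L x)} -> R) : 'rV[R]_d :=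
  \sum_(J in Iset ystar y) gamma J *: dphi phi y (mixed J ystar y).

Context (n : nat) (xs : 'I_n -> X)
        (ys : forall i : 'I_n, {ffun 'I_(L (xs i)) -> DY}).

(* A first pass of SWVP over D = ((xs i, ys i))_{i<n}, in order.
   w k is the weight vector before processing example k (w 0 = 0),
   ystar i is the (any) argmax prediction on example i, and gamma i are the
   weights returned by SetGamma on example i; they are required to satisfy
   the gamma selection conditions (1) and (2) w.r.t. the current weights. *)
Definition swvp_first_pass (w : nat -> 'rV[R]_d)
  (ystar : forall i : 'I_n, {ffun 'I_(L (xs i)) -> DY})
  (gamma : forall i : 'I_n, {set 'I_(L (xs i))} -> R) : Prop :=
  w 0%N = 0 /\
  forall i : 'I_n,
    (forall y' : {ffun 'I_(L (xs i)) -> DY},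
        dotv (w i) (phi y') <= dotv (w i) (phi (ystar i))) /\
    (if ystar i != ys i then
       [/\ forall J, J \in Iset (ystar i) (ys i) -> 0 <= gamma i J,
           \sum_(J in Iset (ystar i) (ys i)) gamma i J = 1,
           dotv (w i) (swvp_upd (ystar i) (ys i) (gamma i)) <= 0 &
           w i.+1 = w i + swvp_upd (ystar i) (ys i) (gamma i)]
     else w i.+1 = w i).

Definition num_mistakes (ystar : forall i : 'I_n, {ffun 'I_(L (xs i)) -> DY}) : nat :=
  #|[set i : 'I_n | ystar i != ys i]|.

(* Radius R and mixed assignment radius R^JJ (minimal nonnegative constants,
   i.e. maxima of the finite sets of norms). *)
Definition radius : R :=
  \big[Num.max/0]_(i < n) \big[Num.max/0]_(z : {ffun 'I_(L (xs i)) -> DY})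
     normv (dphi phi (ys i) z).

Definition radiusJJ : R :=
  \big[Num.max/0]_(i < n) \big[Num.max/0]_(z : {ffun 'I_(L (xs i)) -> DY})
    \big[Num.max/0]_(J in JJ (xs i))
     normv (dphi phi (ys i) (mixed J z (ys i))).

Definition r_marg (u : 'rV[R]_d) (i : 'I_n) : R :=
  dotv u (phi (ys i)) -
  maxne [seq dotv u (phi z) | z <- enum (predC1 (ys i))].

Definition r_margJJ (u : 'rV[R]_d) (i : 'I_n) : R :=
  dotv u (phi (ys i)) -
  maxne [seq dotv u (phi (mixed p.2 p.1 (ys i))) |
         p <- enum [pred p : {ffun 'I_(L (xs i)) -> DY} * {set 'I_(L (xs i))} |
                    (p.2 \in JJ (xs i)) && (mixed p.2 p.1 (ys i) != ys i)]].

Definition eps_i (u : 'rV[R]_d) (delta : R) (i : 'I_n) : R :=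
  Num.max 0 (delta - r_marg u i).

Definition D_ud (u : 'rV[R]_d) (delta : R) : R :=
  Num.sqrt (\sum_(i < n) eps_i u delta i ^+ 2).

(* r^diff = min_i (r^i^JJ - r^i)  (convention: 0 if n = 0) *)
Definition r_diff (u : 'rV[R]_d) : R :=
  minne [seq r_margJJ u i - r_marg u i | i <- enum 'I_n].

End Quantities.

From HB Require Import structures.
From mathcomp Require Import all_boot all_order all_algebra.
From mathcomp Require Import ring lra.
Set Implicit Arguments. Unset Strict Implicit. Unset Printing Implicit Defensive.
Import Order.TTheory GRing.Theory Num.Theory.
Local Open Scope ring_scope.

(** The classical perceptron argument: along the pass the weight vector w
    gains at least rho - eps_i in the direction of the unit vector u at every
    mistake, while |w|^2 grows by at most rad^2 because each update makes a
    non-positive inner product with the current w.  Hence after M mistakes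
    M rho - sum eps_i <= u.w <= sqrt M rad, and Cauchy-Schwarz on the eps_i
    gives sqrt M rho <= rad + D.  For SWVP the update is a convex combination
    of the vectors Delta phi(x, y, m^J): their norms are at most R^JJ and,
    by the definition of r^JJ, their margins along u are at least
    r^JJ >= r + r^diff, which yields the bound with rho = delta + r^diff. *)

Section MaxMinNonempty.
Variable R : rcfType.
Implicit Types (s : seq R) (a c : R).

Lemma maxne_ub s a : a \in s -> a <= maxne s.
Proof. by move=> sa; exact: (le_bigmax_seq _ a xpredT id). Qed.

Lemma maxne_le s c : s != [::] -> (forall a, a \in s -> a <= c) -> maxne s <= c.
Proof.
case: s => // a0 s _ le_c; rewrite /maxne big_seq.
by apply: bigmax_le => [|a]; apply: le_c; rewrite ?mem_head.
Qed.

Lemma minne_lb s a : a \in s -> minne s <= a.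
Proof. by move=> sa; exact: (ge_bigmin_seq _ a xpredT id). Qed.

(* For [s = [::]] this uses the default value [minne [::] = 0]. *)
Lemma minne_ge0 s : (forall a, a \in s -> 0 <= a) -> 0 <= minne s.
Proof.
case: s => [|a0 s] ge0; first by rewrite /minne big_nil.
by rewrite /minne big_seq; apply: le_bigmin => [|a]; apply: ge0; rewrite ?mem_head.
Qed.

End MaxMinNonempty.

Section DotProduct.
Variables (R : rcfType) (d : nat).
Implicit Types (a b c : 'rV[R]_d).

Lemma dotvC a b : dotv a b = dotv b a.
Proof. by apply: eq_bigr => k _; rewrite mulrC. Qed.

Lemma dotvDl a b c : dotv (a + b) c = dotv a c + dotv b c.
Proof. by rewrite /dotv -big_split; apply: eq_bigr => k _; rewrite !mxE mulrDl. Qed.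

Lemma dotvZl t a c : dotv (t *: a) c = t * dotv a c.
Proof. by rewrite /dotv mulr_sumr; apply: eq_bigr => k _; rewrite !mxE mulrA. Qed.

Lemma dotvBl a b c : dotv (a - b) c = dotv a c - dotv b c.
Proof. by rewrite dotvDl -scaleN1r dotvZl mulN1r. Qed.

Lemma dotvDr a b c : dotv c (a + b) = dotv c a + dotv c b.
Proof. by rewrite dotvC dotvDl !(dotvC c). Qed.

Lemma dotvZr t a c : dotv c (t *: a) = t * dotv c a.
Proof. by rewrite dotvC dotvZl dotvC. Qed.

Lemma dotv0l c : dotv 0 c = 0.
Proof. by rewrite -(scale0r 0) dotvZl mul0r. Qed.

Lemma dotv_suml (I : Type) (r : seq I) (P : pred I) (F : I -> 'rV[R]_d) c :
  dotv (\sum_(i <- r | P i) F i) c = \sum_(i <- r | P i) dotv (F i) c.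
Proof. by elim/big_rec2: _ => [|i y1 y2 _ <-]; rewrite ?dotv0l ?dotvDl. Qed.

Lemma dotvv_ge0 a : 0 <= dotv a a.
Proof. by apply: sumr_ge0 => k _; rewrite -expr2 sqr_ge0. Qed.

Lemma normv_ge0 a : 0 <= normv a.
Proof. exact: sqrtr_ge0. Qed.

Lemma dotvv_normv a : dotv a a = normv a ^+ 2.
Proof. by rewrite sqr_sqrtr // dotvv_ge0. Qed.

Lemma dotv_sqr_le a b : dotv a b ^+ 2 <= dotv a a * dotv b b.
Proof.
set A := dotv a a; set B := dotv b b; set C := dotv a b.
have quad x y : 0 <= x ^+ 2 * A + 2 * x * y * C + y ^+ 2 * B.
  have -> : x ^+ 2 * A + 2 * x * y * C + y ^+ 2 * B =
            dotv (x *: a + y *: b) (x *: a + y *: b).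
    by rewrite !dotvDl !dotvDr !dotvZl !dotvZr (dotvC b a) -/A -/B -/C; ring.
  exact: dotvv_ge0.
have A0 : 0 <= A := dotvv_ge0 a.
have [B_gt0|B_le0] := ltrP 0 B.
  have := quad B (- C).
  have -> : B ^+ 2 * A + 2 * B * - C * C + (- C) ^+ 2 * B = B * (A * B - C ^+ 2).
    by ring.
  by rewrite pmulr_rge0 // subr_ge0 mulrC.
have B0 : B = 0 by apply/eqP; rewrite eq_le B_le0 dotvv_ge0.
have := quad C (- (A + 1)); rewrite B0 mulr0; nra.
Qed.

Lemma dotv_le_normv a b : dotv a b <= normv a * normv b.
Proof.
have [ab_le0|ab_gt0] := lerP (dotv a b) 0.
  by apply: le_trans ab_le0 _; rewrite mulr_ge0 ?normv_ge0.
rewrite -sqrtrM ?dotvv_ge0 // -(ger0_norm (ltW ab_gt0)) -sqrtr_sqr.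
by rewrite ler_sqrt ?mulr_ge0 ?dotvv_ge0 ?dotv_sqr_le.
Qed.

Section ConvexCombination.
Variables (I : finType) (A : {set I}) (g : I -> R) (v : I -> 'rV[R]_d).
Hypotheses (g_ge0 : forall J, J \in A -> 0 <= g J) (g_sum1 : \sum_(J in A) g J = 1).

Lemma convex_dotv_ge c m :
  (forall J, J \in A -> m <= dotv c (v J)) ->
  m <= dotv c (\sum_(J in A) g J *: v J).
Proof.
move=> le_m; rewrite dotvC dotv_suml -[m]mul1r -g_sum1 mulr_suml.
by apply: ler_sum => J AJ; rewrite dotvZl dotvC ler_wpM2l ?g_ge0 ?le_m.
Qed.

Lemma convex_normv_le r :
  0 <= r -> (forall J, J \in A -> normv (v J) <= r) ->
  normv (\sum_(J in A) g J *: v J) <= r.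
Proof.
move=> r_ge0 le_r; set s := \sum_(J in A) _.
have s_le : normv s ^+ 2 <= r * normv s.
  rewrite -dotvv_normv {1}/s dotv_suml -[r * _]mul1r -g_sum1 mulr_suml.
  apply: ler_sum => J AJ; rewrite dotvZl ler_wpM2l ?g_ge0 //.
  by apply: le_trans (dotv_le_normv _ _) _; rewrite ler_wpM2r ?normv_ge0 ?le_r.
have := normv_ge0 s; nra.
Qed.

End ConvexCombination.

End DotProduct.

Lemma sum_le_sqrt_card_sqrt_sumsq (R : rcfType) (n : nat) (A : {set 'I_n})
    (f : 'I_n -> R) :
  \sum_(i in A) f i <= Num.sqrt #|A|%:R * Num.sqrt (\sum_i f i ^+ 2).
Proof.
pose a : 'rV[R]_n := \row_i (i \in A)%:R.
pose b : 'rV[R]_n := \row_i ((i \in A)%:R * f i).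
have -> : \sum_(i in A) f i = dotv a b.
  rewrite big_mkcond; apply: eq_bigr => i _; rewrite !mxE.
  by case: (i \in A); rewrite ?mul1r ?mul0r.
have aa : dotv a a = #|A|%:R.
  rewrite -sum1_card natr_sum big_mkcond; apply: eq_bigr => i _; rewrite !mxE.
  by case: (i \in A); rewrite ?mulr1 ?mulr0.
have bb : dotv b b <= \sum_i f i ^+ 2.
  apply: ler_sum => i _; rewrite !mxE.
  by case: (i \in A); rewrite ?mul1r ?mul0r ?mulr0 ?expr2 // -expr2 sqr_ge0.
apply: le_trans (dotv_le_normv a b) _; rewrite /normv aa.
by rewrite ler_wpM2l ?sqrtr_ge0 // ler_sqrt ?bb // sumr_ge0 // => i _; rewrite sqr_ge0.
Qed.

Lemma sum_ord_ltS (R : rcfType) n k (lt_kn : (k < n)%N) (A : {set 'I_n})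
    (F : 'I_n -> R) (ik := Ordinal lt_kn) :
  \sum_(i in A | (i < k.+1)%N) F i =
  \sum_(i in A | (i < k)%N) F i + (if ik \in A then F ik else 0).
Proof.
rewrite (bigID (pred1 ik)) /= addrC; congr (_ + _).
  apply: eq_bigl => i; rewrite -val_eqE /= ltnS leq_eqVlt.
  by case: (i \in A); case: (val i =P k) => [->|] /=; rewrite ?ltnn ?andbT.
case: ifP => Aik; [rewrite (big_pred1 ik) | rewrite big_pred0] => // i.
  have [->|ne] := eqVneq i ik; first by rewrite Aik /= ltnSn ?eqxx.
  by rewrite andbF /= (negbTE ne).
by have [->|_] := eqVneq i ik; rewrite ?Aik ?andbF.
Qed.

Lemma le_sqr_ratio_of_sqrt_bound (R : rcfType) (M c a b S : R) :
  0 <= M -> 0 < c -> 0 <= a -> 0 <= b ->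
  M * c - S <= Num.sqrt M * a -> S <= Num.sqrt M * b ->
  M <= (a + b) ^+ 2 / c ^+ 2.
Proof.
move=> M_ge0 c_gt0 a_ge0 b_ge0 le_a le_b.
rewrite ler_pdivlMr ?exprn_gt0 // -(sqr_sqrtr M_ge0) -exprMn.
set t := Num.sqrt M; have t_ge0 : 0 <= t := sqrtr_ge0 M.
have [->|t_neq0] := eqVneq t 0; first by rewrite mul0r expr0n /= sqr_ge0.
have t_gt0 : 0 < t by rewrite lt_def t_neq0.
have tc_le : t * c <= a + b.
  rewrite -(ler_pM2l t_gt0) mulrA -expr2 /t sqr_sqrtr //.
  by move: le_a le_b; rewrite mulrDr; lra.
have := mulr_ge0 t_ge0 (ltW c_gt0); nra.
Qed.

Lemma ler_sqr_ratio (R : rcfType) (a b e delta r : R) :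
  0 <= a -> a <= b -> 0 <= e -> 0 < delta -> 0 <= r ->
  (a + e) ^+ 2 / (delta + r) ^+ 2 <= (b + e) ^+ 2 / delta ^+ 2.
Proof.
move=> a_ge0 le_ab e_ge0 delta_gt0 r_ge0.
rewrite ler_pdivrMr ?exprn_gt0 ?ltr_wpDr // mulrAC ler_pdivlMr ?exprn_gt0 //.
by apply: ler_pM; rewrite ?sqr_ge0 //; nra.
Qed.

Section PerceptronPass.
Variables (R : rcfType) (d n : nat) (w : nat -> 'rV[R]_d) (A : {set 'I_n})
  (v : 'I_n -> 'rV[R]_d) (u : 'rV[R]_d) (rho rad : R) (eps : 'I_n -> R).
Hypotheses (w0 : w 0 = 0)
  (w_step : forall i : 'I_n, w i.+1 = if i \in A then w i + v i else w i)
  (update_nonpos : forall i, i \in A -> dotv (w i) (v i) <= 0)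
  (update_norm : forall i, i \in A -> normv (v i) <= rad)
  (update_margin : forall i, i \in A -> rho - eps i <= dotv u (v i)).

Lemma pass_invariant k : (k <= n)%N ->
  dotv (w k) (w k) <= (\sum_(i in A | (i < k)%N) 1) * rad ^+ 2 /\
  \sum_(i in A | (i < k)%N) (rho - eps i) <= dotv u (w k).
Proof.
elim: k => [_|k IHk lt_kn].
  by rewrite !big_pred0 => [|i|i]; rewrite ?ltn0 ?andbF // w0 dotv0l dotvC dotv0l mul0r.
have [IHw IHu] := IHk (ltnW lt_kn).
rewrite !(sum_ord_ltS lt_kn) (w_step (Ordinal lt_kn)) /=.
case: ifP => Ai; last by rewrite !addr0.
have vv := update_norm Ai; have v_ge0 := normv_ge0 (v (Ordinal lt_kn)).
have := update_nonpos Ai; have := update_margin Ai.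
rewrite !dotvDl !dotvDr (dotvC _ (w k)) (dotvv_normv (v _)) /=; split; nra.
Qed.

Lemma perceptron_mistake_bound : normv u = 1 -> 0 < rho -> 0 <= rad ->
  #|A|%:R <= (rad + Num.sqrt (\sum_i eps i ^+ 2)) ^+ 2 / rho ^+ 2.
Proof.
move=> u1 rho_gt0 rad_ge0.
have [ww uw] := pass_invariant (leqnn n).
have whole F : \sum_(i in A | (i < n)%N) F i = \sum_(i in A) F i.
  by apply: eq_bigl => i; rewrite ltn_ord andbT.
rewrite whole sumr_const in ww; rewrite whole sumrB sumr_const -mulr_natl in uw.
apply: (le_sqr_ratio_of_sqrt_bound (S := \sum_(i in A) eps i));
  rewrite ?ler0n ?sqrtr_ge0 //; last exact: sum_le_sqrt_card_sqrt_sumsq.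
apply: le_trans uw (le_trans (dotv_le_normv _ _) _).
by rewrite u1 mul1r /normv -[rad]ger0_norm // -sqrtr_sqr -sqrtrM ?ler_sqrt ?mulr_ge0.
Qed.

End PerceptronPass.

Section SWVPMargins.
Variables (R : rcfType) (d : nat) (DY : finType) (X : Type) (L : X -> nat)
  (phi : forall x : X, {ffun 'I_(L x) -> DY} -> 'rV[R]_d)
  (JJ : forall x : X, {set {set 'I_(L x)}})
  (n : nat) (xs : 'I_n -> X) (ys : forall i : 'I_n, {ffun 'I_(L (xs i)) -> DY}).
Implicit Types (u : 'rV[R]_d) (i : 'I_n).

Lemma normv_dphi_mixed_le_radiusJJ i z J : J \in JJ (xs i) ->
  normv (dphi phi (ys i) (mixed J z (ys i))) <= radiusJJ phi JJ ys.
Proof.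
by move=> JJiJ; apply: (bigmax_sup i) => //; apply: (bigmax_sup z) => //;
  apply: (bigmax_sup J).
Qed.

Lemma radiusJJ_ge0 : 0 <= radiusJJ phi JJ ys.
Proof. exact: bigmax_ge_id. Qed.

Lemma radiusJJ_le_radius : radiusJJ phi JJ ys <= radius phi ys.
Proof.
apply: bigmax_le => [|i _]; first exact: bigmax_ge_id.
apply: bigmax_le => [|z _]; first exact: bigmax_ge_id.
apply: bigmax_le => [|J _]; first exact: bigmax_ge_id.
by apply: (bigmax_sup i) => //; apply: (bigmax_sup (mixed J z (ys i))).
Qed.

(* Mixed assignments differing from y^i are among the z <> y^i, so the
   maximum defining r^i^JJ is over a subset of the one defining r^i. *)
Lemma r_marg_le_r_margJJ u i :
  (exists z J, J \in JJ (xs i) /\ mixed J z (ys i) != ys i) ->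
  r_marg phi ys u i <= r_margJJ phi JJ ys u i.
Proof.
move=> [z0 [J0 [JJiJ0 mixed0]]]; rewrite lerD2l lerN2; apply: maxne_le.
  apply/negP => /eqP s0; suff : dotv u (phi (mixed J0 z0 (ys i))) \in [::] by [].
  by rewrite -s0; apply/mapP; exists (z0, J0); rewrite // mem_enum inE /= JJiJ0.
move=> _ /mapP [[z J] + ->]; rewrite mem_enum => /andP [_ mixed_ne].
by apply/maxne_ub/mapP; exists (mixed J z (ys i)); rewrite ?mem_enum ?inE.
Qed.

Lemma r_margJJ_le_dphi_mixed u i z J :
  J \in JJ (xs i) -> mixed J z (ys i) != ys i ->
  r_margJJ phi JJ ys u i <= dotv u (dphi phi (ys i) (mixed J z (ys i))).
Proof.
move=> JJiJ mixed_ne; rewrite dotvC dotvBl !(dotvC _ u) lerD2l lerN2.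
by apply/maxne_ub/mapP; exists (z, J); rewrite // mem_enum inE /= JJiJ.
Qed.

Lemma r_diff_le u i : r_diff phi JJ ys u <= r_margJJ phi JJ ys u i - r_marg phi ys u i.
Proof. by apply/minne_lb/mapP; exists i; rewrite ?mem_enum. Qed.

Lemma r_diff_ge0 u :
  (forall i, exists z J, J \in JJ (xs i) /\ mixed J z (ys i) != ys i) ->
  0 <= r_diff phi JJ ys u.
Proof.
by move=> Hne; apply: minne_ge0 => _ /mapP [i _ ->]; rewrite subr_ge0 r_marg_le_r_margJJ.
Qed.

Section Update.
Variables (i : 'I_n) (z : {ffun 'I_(L (xs i)) -> DY}) (gamma : {set 'I_(L (xs i))} -> R).
Hypotheses (gamma_ge0 : forall J, J \in Iset JJ z (ys i) -> 0 <= gamma J)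
  (gamma_sum1 : \sum_(J in Iset JJ z (ys i)) gamma J = 1).

Lemma normv_swvp_upd_le : normv (swvp_upd phi JJ z (ys i) gamma) <= radiusJJ phi JJ ys.
Proof.
apply: convex_normv_le => //; first exact: radiusJJ_ge0.
by move=> J; rewrite inE => /andP [JJiJ _]; apply: normv_dphi_mixed_le_radiusJJ.
Qed.

Lemma r_margJJ_le_swvp_upd u :
  r_margJJ phi JJ ys u i <= dotv u (swvp_upd phi JJ z (ys i) gamma).
Proof.
apply: convex_dotv_ge => // J; rewrite inE => /andP [JJiJ mixed_ne].
exact: r_margJJ_le_dphi_mixed.
Qed.

Lemma swvp_upd_margin u delta :
  delta + r_diff phi JJ ys u - eps_i phi ys u delta i <=
  dotv u (swvp_upd phi JJ z (ys i) gamma).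
Proof.
have := r_margJJ_le_swvp_upd u; have := r_diff_le u i.
have : delta - r_marg phi ys u i <= eps_i phi ys u delta i by rewrite le_max lexx orbT.
lra.
Qed.

End Update.

End SWVPMargins.

Theorem theorem2 (R : rcfType) (d : nat) (DY : finType) (X : Type)
  (L : X -> nat) (phi : forall x : X, {ffun 'I_(L x) -> DY} -> 'rV[R]_d)
  (JJ : forall x : X, {set {set 'I_(L x)}})
  (n : nat) (xs : 'I_n -> X) (ys : forall i : 'I_n, {ffun 'I_(L (xs i)) -> DY})
  (* the maxima defining r^i and r^i^JJ range over nonempty sets *)
  (Hne : forall i : 'I_n, exists (z : {ffun 'I_(L (xs i)) -> DY})
           (J : {set 'I_(L (xs i))}), J \in JJ (xs i) /\ mixed J z (ys i) != ys i)
  (w : nat -> 'rV[R]_d)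
  (ystar : forall i : 'I_n, {ffun 'I_(L (xs i)) -> DY})
  (gamma : forall i : 'I_n, {set 'I_(L (xs i))} -> R) :
  swvp_first_pass phi JJ ys w ystar gamma ->
  forall (u : 'rV[R]_d) (delta : R), normv u = 1 -> 0 < delta ->
    [/\ 0 <= r_diff phi JJ ys u,
        (num_mistakes ys ystar)%:R <=
          (radiusJJ phi JJ ys + D_ud phi ys u delta) ^+ 2
            / (delta + r_diff phi JJ ys u) ^+ 2 &
        (radiusJJ phi JJ ys + D_ud phi ys u delta) ^+ 2
            / (delta + r_diff phi JJ ys u) ^+ 2
          <= (radius phi ys + D_ud phi ys u delta) ^+ 2 / delta ^+ 2].
Proof.
move=> [w0 pass] u delta u1 delta_gt0.
have rdiff_ge0 : 0 <= r_diff phi JJ ys u := r_diff_ge0 phi u Hne.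
split=> //; last first.
  by apply: ler_sqr_ratio; rewrite ?radiusJJ_ge0 ?radiusJJ_le_radius ?sqrtr_ge0.
have rho_gt0 : 0 < delta + r_diff phi JJ ys u by rewrite ltr_wpDr.
have radJJ_ge0 := radiusJJ_ge0 phi JJ ys.
rewrite /num_mistakes /D_ud.
apply: (perceptron_mistake_bound (w := w) (u := u)
         (v := fun i => swvp_upd phi JJ (ystar i) (ys i) (gamma i))) => //.
all: move=> i; rewrite inE; have [_] := pass i.
- by case: ifP => // _ [].
- by move=> + mis; rewrite mis => -[].
- by move=> + mis; rewrite mis => -[gamma_ge0 gamma_sum1 _ _]; apply: normv_swvp_upd_le.
by move=> + mis; rewrite mis => -[gamma_ge0 gamma_sum1 _ _]; apply: swvp_upd_margin.
Qed.
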